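(* Let $G=(V,E,w)$ be a graph with $V\neq\emptyset$, positive vertex weights and maximum degree $\Delta\ge1$. Let $1\le\alpha\le\Delta$ and $\gamma=\lceil\sqrt{2\Delta\alpha}\,\rceil$, and suppose $G$ is a $\gamma$-stable instance of \texttt{MIS} with maximum weight independent set $I^*$. If $I'$ is an independent set of $G$ with $w(I')\ge w(I^* )/\alpha$, then $I^*\cap I'\neq\emptyset$.
   Context: \texttt{MIS}: given a graph $G=(V,E)$ with weights $w:V\to\mathbb{R}_{>0}$, find an independent set maximizing $w(I)=\sum_{u\in I}w_u$; $w(X)=\sum_{u\in X}w_u$. For $\gamma\ge1$, a $\gamma$-perturbation of $w$ is any $w'$ with $w_u\le w'_u\le\gamma w_u$ for all $u$. The instance is $\gamma$-stable if it has a unique maximum weight independent set $I^*$ and $I^*$ remains the unique maximum weight independent set under every $\gamma$-perturbation of $w$. *)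

From HB Require Import structures.
From mathcomp Require Import all_boot all_order all_algebra.
Set Implicit Arguments. Unset Strict Implicit. Unset Printing Implicit Defensive.
Import Order.TTheory GRing.Theory Num.Theory.
Local Open Scope ring_scope.

Definition simple_graph (T : finType) (e : rel T) : Prop :=
  (forall u v, e u v = e v u) /\ (forall u, ~~ e u u).

Definition deg (T : finType) (e : rel T) (u : T) : nat := #|[set v | e u v]|.
Definition maxdeg (T : finType) (e : rel T) : nat := (\max_(u : T) deg e u)%N.

Definition independent (T : finType) (e : rel T) (I : {set T}) : bool :=
  [forall u in I, forall v in I, ~~ e u v].

Definition wsum (R : numDomainType) (T : finType) (w : T -> R) (X : {set T}) : R :=
  \sum_(u in X) w u.

Definition unique_MWIS (R : numDomainType) (T : finType) (e : rel T) (w : T -> R)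
  (I : {set T}) : Prop :=
  independent e I /\
  forall J : {set T}, independent e J -> J != I -> wsum w J < wsum w I.

Definition perturbation (R : numDomainType) (T : finType) (g : R) (w w' : T -> R) : Prop :=
  forall u, w u <= w' u <= g * w u.

Definition stable (R : numDomainType) (T : finType) (e : rel T) (w : T -> R)
  (g : R) (Istar : {set T}) : Prop :=
  unique_MWIS e w Istar /\
  forall w' : T -> R, perturbation g w w' -> unique_MWIS e w' Istar.

From HB Require Import structures.
From mathcomp Require Import all_boot all_order all_algebra.
Import Order.TTheory GRing.Theory Num.Theory.
Set Implicit Arguments.
Unset Strict Implicit.
Unset Printing Implicit Defensive.
Local Open Scope ring_scope.

(* If [I'] misses [Istar], multiply the weights of [I'] by [gamma]: the result
   is a [gamma]-perturbation under which [Istar] keeps its weight while [I'] gains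
   the factor [gamma].  Stability then forces [gamma w(I') < w(Istar)], which fails
   once [w(I') >= w(Istar)/alpha], because [gamma >= sqrt(2 Delta alpha) >= alpha]
   whenever [alpha <= Delta]. *)

Section Perturbation.

Variables (R : numDomainType) (T : finType).
Implicit Types (w : T -> R) (A X : {set T}).

Definition scale_on (g : R) w A (u : T) : R := if u \in A then g * w u else w u.

Lemma perturbation_scale_on g w A :
  1 <= g -> (forall u, 0 <= w u) -> perturbation g w (scale_on g w A).
Proof.
move=> g1 w_ge0 u; rewrite /scale_on.
by case: (u \in A); rewrite lexx ler_peMl.
Qed.

Lemma wsum_scale_on_sub g w A X :
  X \subset A -> wsum (scale_on g w A) X = g * wsum w X.
Proof.
move=> /subsetP XA; rewrite /wsum mulr_sumr.
by apply: eq_bigr => u uX; rewrite /scale_on XA.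
Qed.

Lemma wsum_scale_on_disjoint g w A X :
  X :&: A = set0 -> wsum (scale_on g w A) X = wsum w X.
Proof.
move=> XA0; apply: eq_bigr => u uX; rewrite /scale_on.
by case: ifP => // uA; have := in_set0 u; rewrite -XA0 inE uX uA.
Qed.

End Perturbation.

Lemma unique_MWIS_neq0 (R : numDomainType) (T : finType) (e : rel T)
    (w : T -> R) (I : {set T}) :
  (forall u, ~~ e u u) -> (forall u, 0 < w u) -> (0 < #|T|)%N ->
  unique_MWIS e w I -> I != set0.
Proof.
move=> e_irr w_gt0 /card_gt0P [u _] [_ I_max]; apply/eqP => I0.
have indu : independent e [set u].
  apply/forallP => x; apply/implyP; rewrite inE => /eqP ->.
  by apply/forallP => y; apply/implyP; rewrite inE => /eqP ->; exact: e_irr.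
have u_neq : [set u] != I by rewrite I0; apply/set0Pn; exists u; rewrite inE.
have := I_max _ indu u_neq.
rewrite I0 /wsum big_set0 big_set1.
by move/(lt_trans (w_gt0 u)); rewrite ltxx.
Qed.

Lemma stable_meets (R : numDomainType) (T : finType) (e : rel T) (w : T -> R)
    (g : R) (Istar J : {set T}) :
  (forall u, 0 <= w u) -> 1 <= g -> stable e w g Istar ->
  independent e J -> J != Istar -> wsum w Istar <= g * wsum w J ->
  Istar :&: J != set0.
Proof.
move=> w_ge0 g1 [_ stab] indJ JS heavy; apply/eqP => disj.
have [_ /(_ J indJ JS)] := stab _ (perturbation_scale_on J g1 w_ge0).
rewrite wsum_scale_on_sub // wsum_scale_on_disjoint //.
by move/lt_geF; rewrite heavy.
Qed.

Lemma ceil_sqrt_ge (R : archiRcfType) (d a : R) :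
  0 <= a -> a <= 2 * d -> a <= (Num.ceil (Num.sqrt (2 * d * a)))%:~R.
Proof.
move=> a_ge0 a_le; apply: le_trans (ceil_ge _).
rewrite -{1}(ger0_norm a_ge0) -sqrtr_sqr.
by apply: ler_wsqrtr; rewrite expr2 ler_wpM2r.
Qed.

Theorem mainTheorem6 (R : archiRcfType) (T : finType) (e : rel T) (w : T -> R)
  (alpha : R) (Istar I' : {set T}) :
  simple_graph e ->
  (0 < #|T|)%N ->
  (forall u, 0 < w u) ->
  (1 <= maxdeg e)%N ->
  1 <= alpha -> alpha <= (maxdeg e)%:R ->
  stable e w ((Num.ceil (Num.sqrt (2 * (maxdeg e)%:R * alpha)))%:~R) Istar ->
  independent e I' ->
  wsum w Istar / alpha <= wsum w I' ->
  Istar :&: I' != set0.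
Proof.
move=> [_ e_irr] T_gt0 w_gt0 _ a1 aD stab indI' heavy.
set g : R := (Num.ceil _)%:~R in stab.
have a_gt0 : 0 < alpha by apply: lt_le_trans a1.
have a_le_g : alpha <= g.
  apply: ceil_sqrt_ge; first exact: ltW.
  by rewrite (le_trans aD) // ler_peMl // ler1n.
have [->|I'S] := eqVneq I' Istar.
  by rewrite setIid; exact: unique_MWIS_neq0 e_irr w_gt0 T_gt0 stab.1.
have w_ge0 u : 0 <= w u by exact: ltW.
apply: (stable_meets w_ge0 (le_trans a1 a_le_g) stab indI' I'S).
apply: le_trans (_ : alpha * wsum w I' <= _).
  by rewrite mulrC -ler_pdivrMr.
by rewrite ler_wpM2r // sumr_ge0.
Qed.
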